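(* Let $\rho:\pi_1(T^2)=\langle q,h\mid [q,h]=1\rangle\to SL(2,\mathbb{C})$ be a homomorphism. Then the twisted chain complex $C_*(T^2;V_{2N})$ defined by $\rho_{2N}=\sigma_{2N}\circ\rho$ is acyclic for every $N\ge1$ if and only if at least one of $\rho(q)$, $\rho(h)$ neither has finite odd order nor is a parabolic matrix of trace $2$ (i.e. a non-identity, non-diagonalizable matrix of trace $2$).
   Context: For $n\ge1$, let $V_n$ be the $\mathbb{C}$-vector space of homogeneous polynomials of degree $n-1$ in $z_1,z_2$, and let $\sigma_n:SL(2,\mathbb{C})\to SL(V_n)$ be the $n$-dimensional irreducible representation $(\sigma_n(A)p)(z_1,z_2)=p\big(A^{-1}(z_1,z_2)^T\big)$. For a finite CW-complex $W$ and a homomorphism $\rho:\pi_1(W)\to SL(2,\mathbb{C})$ put $\rho_n=\sigma_n\circ\rho$. The twisted chain complex is $C_*(W;V_n)=V_n\otimes_{\mathbb{Z}[\pi_1(W)]}C_*(\widetilde W;\mathbb{Z})$, where $\widetilde W$ is the universal cover, $V_n$ is a right $\mathbb{Z}[\pi_1(W)]$-module via $\rho_n^{-1}$, and its homology is denoted $H_*(W;V_n)$. The complex (or $\rho_n$) is called acyclic if $H_*(W;V_n)=0$. *)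

From HB Require Import structures.
From mathcomp Require Import all_boot all_order all_algebra.
Set Implicit Arguments. Unset Strict Implicit. Unset Printing Implicit Defensive.
Import Order.TTheory GRing.Theory Num.Theory.
Local Open Scope ring_scope.

Definition i0 : 'I_2 := ord0.
Definition i1 : 'I_2 := ord_max.

(* sigma n A : matrix of sigma_n(A) on V_n (homogeneous polynomials of degree
   n-1 in z1,z2), in the basis e_k = z1^(n-1-k) z2^k, k < n.
   Row k of the matrix is the coordinate vector of sigma_n(A) e_k, so that the
   linear map sigma_n(A) acts on coordinate row vectors by v |-> v *m sigma n A.
   With A^{-1} = [[a',b'],[c',d']], (sigma_n(A) p)(z) = p(A^{-1} z) sends
   e_k to (a' z1 + b' z2)^(n-1-k) (c' z1 + d' z2)^k; dehomogenising z1 = 1,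
   z2 = t, the coordinate on e_j is the coefficient of t^j in
   (a' + b' t)^(n-1-k) (c' + d' t)^k. *)
Definition sigma {C : fieldType} (n : nat) (A : 'M[C]_2) : 'M[C]_n :=
  let Ai := invmx A in
  \matrix_(k < n, j < n)
    ((((Ai i0 i0)%:P + (Ai i0 i1)%:P * 'X) ^+ (n.-1 - k)
      * ((Ai i1 i0)%:P + (Ai i1 i1)%:P * 'X) ^+ k) : {poly C})`_j.

(* Right action of g on V_n via rho_n^{-1}: v . g = rho_n(g)^{-1} v, i.e.
   v |-> v *m invmx (sigma n (rho g)). *)
Definition ract {C : fieldType} (n : nat) (A : 'M[C]_2) : 'M[C]_n :=
  invmx (sigma n A).

(* Twisted chain complex of the torus T^2 with its standard CW structure
   (one 0-cell, 1-cells e_q, e_h, one 2-cell attached along q h q^-1 h^-1),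
   coefficients V_n, rho(q) = Q, rho(h) = H.  By Fox calculus:
     d2 (v (x) e2) = v.(1 - h) (x) e_q + v.(q - 1) (x) e_h
     d1 (v (x) e_q) = v.(q - 1) (x) e0,  d1 (v (x) e_h) = v.(h - 1) (x) e0.
   C_2 = V_n, C_1 = V_n + V_n, C_0 = V_n; maps act on row vectors on the right. *)
Definition bd2 {C : fieldType} (n : nat) (Q H : 'M[C]_2) : 'M[C]_(n, n + n) :=
  row_mx (1%:M - ract n H) (ract n Q - 1%:M).
Definition bd1 {C : fieldType} (n : nat) (Q H : 'M[C]_2) : 'M[C]_(n + n, n) :=
  col_mx (ract n Q - 1%:M) (ract n H - 1%:M).

(* H_2 = ker d2, H_1 = ker d1 / im d2, H_0 = C_0 / im d1 all vanish. *)
Definition torus_acyclic {C : fieldType} (n : nat) (Q H : 'M[C]_2) : Prop :=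
  [/\ (forall v : 'rV[C]_n, v *m bd2 n Q H = 0 -> v = 0),
      (forall w : 'rV[C]_(n + n), w *m bd1 n Q H = 0 ->
          exists v : 'rV[C]_n, w = v *m bd2 n Q H)
    & (forall u : 'rV[C]_n, exists w : 'rV[C]_(n + n), u = w *m bd1 n Q H)].

Definition finite_odd_order {C : fieldType} (A : 'M[C]_2) : Prop :=
  exists k : nat, [/\ (0 < k)%N, odd k, A ^+ k = 1
                    & forall j : nat, (0 < j < k)%N -> A ^+ j != 1].

Definition diagonalizable {C : fieldType} (A : 'M[C]_2) : Prop :=
  exists P : 'M[C]_2, P \in unitmx /\ is_diag_mx (invmx P *m A *m P).

Definition parabolic_tr2 {C : fieldType} (A : 'M[C]_2) : Prop :=
  [/\ \tr A = 2, A != 1 & ~ diagonalizable A].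

From HB Require Import structures.
From mathcomp Require Import all_boot all_order all_algebra.
From mathcomp Require Import ring.
From Stdlib Require Import Classical.
Set Implicit Arguments. Unset Strict Implicit. Unset Printing Implicit Defensive.
Import Order.TTheory GRing.Theory Num.Theory.
Local Open Scope ring_scope.

(* Let T_n(X) (sympow below) be the matrix of the n-th symmetric power of a
   2x2 matrix X, acting on row vectors.  The Veronese vector of u (the
   coefficients of (u0 + u1 t)^(n-1)) satisfies veronese(u) T_n(X) =
   veronese(uX); in characteristic zero the Veronese vectors span V_n, so T_n
   is multiplicative and the right action v.A = sigma_n(A)^-1 v of the
   statement is v T_n(A).

   The complex C_*(T^2; V_n) is the Koszul complex of the commuting matrices
   T_n(Q) - 1 and T_n(H) - 1: it is exact once either is invertible, and every
   common fixed vector of T_n(Q) and T_n(H) is a nonzero cycle in H_2.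

   If Q is neither of finite odd order nor parabolic then T_{m+1}(Q) - 1 is
   invertible for every odd m: triangularising Q (Schur), the eigenvalues of
   T_{m+1}(Q) are the a^(m-k) b^k with ab = 1, and such a product is 1 only
   when a, b are roots of unity of a common odd order, which makes Q of finite
   odd order (a <> b, by Cayley-Hamilton) or the identity or parabolic
   (a = b = 1).  Conversely, if Q and H are both of finite odd order or
   parabolic, their eigenvalues are roots of unity of one odd order k, and the
   Veronese vector of a common eigenvector is a nonzero class in H_2 of
   C_*(T^2; V_{k+1}). *)

Lemma big_ord2 {T : Type} {idx : T} (op : Monoid.law idx) (F : 'I_2 -> T) :
  \big[op/idx]_(i < 2) F i = op (F i0) (F i1).
Proof. by rewrite big_ord_recl big_ord1; congr (op _ (F _)); apply: val_inj. Qed.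

Section TwoByTwo.
Context {R : comNzRingType}.

Lemma ord2P (i : 'I_2) : i = i0 \/ i = i1.
Proof. by case: i => [[|[|//]]] ?; [left|right]; apply: val_inj. Qed.

Lemma det2 (A : 'M[R]_2) : \det A = A i0 i0 * A i1 i1 - A i0 i1 * A i1 i0.
Proof.
rewrite (expand_det_row _ i0) big_ord2 /cofactor !det_mx11 !mxE /=.
have -> : lift i0 0 = i1 by apply: val_inj.
have -> : lift i1 0 = i0 by apply: val_inj.
by rewrite expr0 expr1 mul1r mulN1r mulrN.
Qed.

Lemma tr2 (A : 'M[R]_2) : \tr A = A i0 i0 + A i1 i1.
Proof. exact: big_ord2. Qed.

End TwoByTwo.

Lemma eq1_of_mul1_add2 {R : idomainType} (a b : R) : a * b = 1 -> a + b = 2 -> a = 1.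
Proof.
move=> ab sum; have sq0 : (a - 1) ^+ 2 = a * (a + b) - a * 2 + (1 - a * b) by ring.
rewrite sum ab !subrr addr0 in sq0.
by move/eqP: sq0; rewrite expf_eq0 subr_eq0 => /eqP.
Qed.

Lemma conj_det_tr {R : comUnitRingType} n (P W : 'M[R]_n) : P \in unitmx ->
  \det (invmx P *m W *m P) = \det W /\ \tr (invmx P *m W *m P) = \tr W.
Proof.
move=> uP; split; last by rewrite mxtrace_mulC mulmxA mulmxV // mul1mx.
by rewrite !det_mulmx mulrAC -det_mulmx mulVmx // det1 mul1r.
Qed.

Section SymmetricPower.
Context {R : comNzRingType}.

Definition linpoly (a b : R) : {poly R} := a%:P + b%:P * 'X.

Lemma coef_linpoly_exp (a b : R) m j :
  (linpoly a b ^+ m)`_j = 'C(m, j)%:R * a ^+ (m - j) * b ^+ j.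
Proof.
rewrite exprDn coef_sum.
have termE i : (a%:P ^+ (m - i) * (b%:P * 'X) ^+ i *+ 'C(m, i) : {poly R})
    = ('C(m, i)%:R * a ^+ (m - i) * b ^+ i)%:P * 'X^i.
  by rewrite exprMn !polyCM !rmorphXn /= polyC_natr; ring.
under eq_bigr => i _ do rewrite termE coefCM coefXn.
case: (ltnP m j) => [ltmj|lejm].
  rewrite bin_small // !mul0r big1 // => i _.
  by rewrite eqn_leq leqNgt (leq_trans (ltn_ord i) ltmj) mulr0.
rewrite (bigD1 (Ordinal (leq_ltn_trans lejm (ltnSn m)))) //= eqxx mulr1 big1 ?addr0 //.
move=> i ni; case: eqP => [ei|]; last by rewrite mulr0.
by case/eqP: ni; apply/val_inj; rewrite /= ei.
Qed.

(* Row k of sympow n X holds the coefficients of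
   (X00 + X01 t)^(n-1-k) (X10 + X11 t)^k; by definition sigma n A is
   sympow n (invmx A). *)
Definition sympow n (X : 'M[R]_2) : 'M[R]_n :=
  \matrix_(k < n, j < n)
    (linpoly (X i0 i0) (X i0 i1) ^+ (n.-1 - k) * linpoly (X i1 i0) (X i1 i1) ^+ k)`_j.

Definition veronese n (u : 'rV[R]_2) : 'rV[R]_n :=
  \row_(k < n) ('C(n.-1, k)%:R * u 0 i0 ^+ (n.-1 - k) * u 0 i1 ^+ k).

Lemma veroneseE n (u : 'rV[R]_2) k :
  veronese n u 0 k = (linpoly (u 0 i0) (u 0 i1) ^+ n.-1)`_k.
Proof. by rewrite coef_linpoly_exp mxE. Qed.

Lemma veronese_sympow n (u : 'rV[R]_2) X :
  veronese n.+1 u *m sympow n.+1 X = veronese n.+1 (u *m X).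
Proof.
apply/rowP => j; rewrite mxE veroneseE.
have -> : linpoly ((u *m X) 0 i0) ((u *m X) 0 i1) =
    (u 0 i0)%:P * linpoly (X i0 i0) (X i0 i1) + (u 0 i1)%:P * linpoly (X i1 i0) (X i1 i1).
  by rewrite /linpoly !mxE !big_ord2 !polyCD !polyCM; ring.
rewrite exprDn coef_sum; apply: eq_bigr => k _.
rewrite !mxE /= -coefCM; apply: (congr1 (fun p : {poly R} => p`_j)).
by rewrite !exprMn !polyCM !rmorphXn /= polyC_natr -[RHS]mulr_natl; ring.
Qed.

Lemma veroneseZ n c (u : 'rV[R]_2) : veronese n.+1 (c *: u) = c ^+ n *: veronese n.+1 u.
Proof.
apply/rowP => k; rewrite !mxE /=.
have -> : c ^+ n = c ^+ (n - k) * c ^+ k by rewrite -exprD subnK // -ltnS.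
by rewrite !exprMn; ring.
Qed.

Lemma sympow_lower n (X : 'M[R]_2) k j : X i0 i1 = 0 ->
  sympow n X k j = X i0 i0 ^+ (n.-1 - k) * ('C(k, j)%:R * X i1 i0 ^+ (k - j) * X i1 i1 ^+ j).
Proof.
by move=> X01; rewrite mxE {1}/linpoly X01 mul0r addr0 -rmorphXn coefCM coef_linpoly_exp.
Qed.

End SymmetricPower.

Section CharacteristicZero.
Context {C : numFieldType}.

(* The vectors veronese (1, i), i <= n, form a basis: their matrix is a
   Vandermonde matrix at distinct nodes times an invertible diagonal. *)
Lemma veronese_basis n :
  \matrix_(i < n.+1, k < n.+1) veronese n.+1 (\row_(j < 2) (i%:R : C) ^+ j) 0 k
    \in unitmx.
Proof.
set M := \matrix_(i < n.+1, k < n.+1) _.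
have -> : M = (Vandermonde n.+1 (\row_(j < n.+1) (j : nat)%:R))^T
                *m diag_mx (\row_(k < n.+1) ('C(n, k))%:R).
  apply/matrixP => i k; rewrite mul_mx_diag !mxE /=.
  by rewrite expr0 expr1 expr1n mulr1 mulrC.
rewrite unitmxE det_mulmx det_tr det_diag det_Vandermonde unitfE mulf_neq0 //.
  apply/prodf_neq0 => i _; apply/prodf_neq0 => j lij; rewrite !mxE subr_eq0 eqr_nat.
  by rewrite eq_sym neq_ltn lij.
apply/prodf_neq0 => k _; rewrite mxE pnatr_eq0 -lt0n bin_gt0 -ltnS.
exact: ltn_ord.
Qed.

Lemma sympow_ext n (A B : 'M[C]_n.+1) :
  (forall u, veronese n.+1 u *m A = veronese n.+1 u *m B) -> A = B.
Proof.
move=> eqAB; have uM := veronese_basis n.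
rewrite -(mulKmx uM A) -(mulKmx uM B); congr (_ *m _).
by apply/row_matrixP => i; rewrite !row_mul rowK.
Qed.

Lemma sympow1 n : sympow n.+1 (1%:M : 'M[C]_2) = 1%:M.
Proof. by apply: sympow_ext => u; rewrite veronese_sympow !mulmx1. Qed.

Lemma sympowM n (A B : 'M[C]_2) : sympow n.+1 (A *m B) = sympow n.+1 A *m sympow n.+1 B.
Proof. by apply: sympow_ext => u; rewrite mulmxA !veronese_sympow mulmxA. Qed.

(* For invertible A the right action of the statement is the symmetric power:
   ract n A = (sympow n A^-1)^-1 = sympow n A. *)
Lemma ract_sympow n (A : 'M[C]_2) : A \in unitmx -> ract n.+1 A = sympow n.+1 A.
Proof.
move=> uA; have inv : sympow n.+1 (invmx A) *m sympow n.+1 A = 1%:M.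
  by rewrite -sympowM mulVmx // sympow1.
have [uS _] := mulmx1_unit inv.
rewrite /ract; change (invmx (sympow n.+1 (invmx A)) = sympow n.+1 A).
by rewrite -[RHS]mul1mx -(mulVmx uS) -mulmxA inv mulmx1.
Qed.

(* The Veronese vector of a nonzero vector is nonzero: its first or last
   coordinate is a pure power of a nonzero coordinate of u. *)
Lemma veronese_neq0 n (u : 'rV[C]_2) : u != 0 -> veronese n.+1 u != 0.
Proof.
move=> nu; case: (eqVneq (u 0 i0) 0) => h0.
  have h1 : u 0 i1 != 0.
    apply: contraNneq nu => h1; apply/eqP/rowP => j; rewrite mxE.
    by case: (ord2P j) => ->.
  apply/eqP => /rowP /(_ ord_max); rewrite !mxE /= subnn binn expr0 !mul1r.
  by move/eqP; rewrite expf_eq0 (negPf h1) andbF.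
apply/eqP => /rowP /(_ ord0); rewrite !mxE /= subn0 bin0 expr0 mul1r mulr1.
by move/eqP; rewrite expf_eq0 (negPf h0) andbF.
Qed.

Lemma det_sympow_conj_sub1 n (P W : 'M[C]_2) : P \in unitmx ->
  \det (sympow n.+1 (invmx P *m W *m P) - 1%:M) = \det (sympow n.+1 W - 1%:M).
Proof.
move=> uP; have SPV : sympow n.+1 (invmx P) *m sympow n.+1 P = 1%:M.
  by rewrite -sympowM mulVmx // sympow1.
have -> : sympow n.+1 (invmx P *m W *m P) - 1%:M
    = sympow n.+1 (invmx P) *m (sympow n.+1 W - 1%:M) *m sympow n.+1 P.
  by rewrite !sympowM mulmxBr mulmxBl mulmx1 SPV.
by rewrite !det_mulmx mulrAC -det_mulmx SPV det1 mul1r.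
Qed.

Lemma det_sympow_lower_sub1 n (W : 'M[C]_2) : W i0 i1 = 0 ->
  \det (sympow n.+1 W - 1%:M) = \prod_(k < n.+1) (W i0 i0 ^+ (n - k) * W i1 i1 ^+ k - 1).
Proof.
move=> W01; rewrite det_trig.
  by apply: eq_bigr => k _; rewrite mxE sympow_lower // !mxE eqxx subnn binn expr0 !mul1r.
apply/is_trig_mxP => k j ltkj; rewrite mxE sympow_lower // bin_small // !mxE.
by rewrite -val_eqE (ltn_eqF ltkj) !mul0r mulr0 subr0.
Qed.

End CharacteristicZero.

Section Koszul.
Context {F : fieldType}.

(* The twisted complex is the Koszul complex of A = ract Q - 1 and
   B = ract H - 1: d2 v = (-vB, vA), d1 (w1, w2) = w1 A + w2 B.  Matrices S, T
   commuting with A and B with SA + TB = 1 give a contracting homotopy. *)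
Lemma torus_acyclic_of_bezout n (Q H : 'M[F]_2) (S T : 'M[F]_n) :
  let A := ract n Q - 1%:M in let B := ract n H - 1%:M in
  comm_mx S A -> comm_mx S B -> comm_mx T A -> comm_mx T B ->
  S *m A + T *m B = 1%:M -> torus_acyclic n Q H.
Proof.
move=> A B SA SB TA TB bezout.
have splitE (v : 'rV_n) : v = (v *m A) *m S + (v *m B) *m T.
  by rewrite -!mulmxA -SA -TB -mulmxDr bezout mulmx1.
have bd2E : bd2 n Q H = row_mx (- B) A by rewrite /bd2 opprB.
rewrite /torus_acyclic bd2E /bd1 -/A -/B; split.
- move=> v; rewrite mul_mx_row mulmxN -row_mx0 => /eq_row_mx [vB vA].
  have {}vB : v *m B = 0 by apply/eqP; rewrite -oppr_eq0 vB.
  by rewrite [v]splitE vA vB !mul0mx addr0.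
- move=> w; rewrite -[w]hsubmxK mul_row_col => cycle.
  have w2B : rsubmx w *m B = - (lsubmx w *m A) by apply/eqP; rewrite -addr_eq0 addrC cycle.
  exists (rsubmx w *m S - lsubmx w *m T); rewrite mul_mx_row; congr row_mx.
    rewrite {1}[lsubmx w]splitE mulmxN mulmxBl opprB -!mulmxA SB TB !mulmxA w2B.
    by rewrite mulNmx opprK addrC.
  by rewrite {1}[rsubmx w]splitE mulmxBl -!mulmxA SA TA !mulmxA w2B mulNmx.
- move=> u; exists (row_mx (u *m S) (u *m T)).
  by rewrite mul_row_col -!mulmxA -mulmxDr bezout mulmx1.
Qed.

Lemma comm_invmx n (X Y : 'M[F]_n) : X \in unitmx -> comm_mx X Y -> comm_mx (invmx X) Y.
Proof.
move=> uX XY; rewrite /comm_mx -[LHS]mulmx1 -(mulmxV uX) !mulmxA.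
by rewrite -[invmx X *m Y *m X]mulmxA -XY mulmxA mulVmx // mul1mx.
Qed.

Lemma torus_acyclic_of_unit n (Q H : 'M[F]_2) :
  comm_mx (ract n Q) (ract n H) ->
  ract n Q - 1%:M \in unitmx \/ ract n H - 1%:M \in unitmx -> torus_acyclic n Q H.
Proof.
move=> cQH; set A := ract n Q - 1%:M; set B := ract n H - 1%:M.
have cAB : comm_mx A B.
  apply: comm_mxB (comm_mx1 _); apply: comm_mx_sym.
  exact: comm_mxB (comm_mx_sym cQH) (comm_mx1 _).
case=> [uA|uB].
  apply: (@torus_acyclic_of_bezout n Q H (invmx A) 0).
  - exact: comm_invmx (comm_mx_refl A).
  - exact: comm_invmx cAB.
  - exact: comm0mx.
  - exact: comm0mx.
  - by rewrite mulVmx // mul0mx addr0.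
apply: (@torus_acyclic_of_bezout n Q H 0 (invmx B)).
- exact: comm0mx.
- exact: comm0mx.
- exact: comm_invmx (comm_mx_sym cAB).
- exact: comm_invmx (comm_mx_refl B).
- by rewrite mulVmx // mul0mx add0r.
Qed.

End Koszul.

Section Eigenvalues.
Context {F : fieldType}.

Lemma eigen_exp n (A : 'M[F]_n) (u : 'rV_n) mu k :
  u *m A = mu *: u -> u *m A ^+ k = mu ^+ k *: u.
Proof.
move=> uA; elim: k => [|k IHk]; first by rewrite !expr0 mulmx1 scale1r.
by rewrite exprSr -mulmxE mulmxA IHk -scalemxAl uA scalerA exprSr mulrC.
Qed.

Lemma eigen_trace2 (Q : 'M[F]_2) (u : 'rV_2) mu : \det Q = 1 -> \tr Q = 2 ->
  u != 0 -> u *m Q = mu *: u -> mu = 1.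
Proof.
move=> dQ tQ nu uQ.
have : \det (Q - mu%:M) = 0.
  apply/eqP; rewrite -[_ == 0]negbK -unitfE -unitmxE; apply: contra nu => uQmu.
  by rewrite -(mulmxK uQmu u) mulmxBr uQ mul_mx_scalar subrr mul0mx.
rewrite det2 !mxE /= !mulr1n !mulr0n !subr0 => char0.
apply: (@eq1_of_mul1_add2 _ _ (2 - mu)); last by rewrite addrC subrK.
move: dQ tQ; rewrite det2 tr2 => dQ tQ.
have : mu * (2 - mu) - 1 = - ((Q i0 i0 - mu) * (Q i1 i1 - mu) - Q i0 i1 * Q i1 i0).
  by rewrite -tQ -dQ; ring.
by rewrite char0 oppr0 => /eqP; rewrite subr_eq0 => /eqP.
Qed.

Lemma odd_root_eigenvalues (Q : 'M[F]_2) : \det Q = 1 ->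
  finite_odd_order Q \/ parabolic_tr2 Q ->
  exists2 k, odd k & forall (u : 'rV_2) mu, u != 0 -> u *m Q = mu *: u -> mu ^+ k = 1.
Proof.
move=> dQ [[k [_ oddk Qk _]] | [tQ _ _]]; last first.
  by exists 1%N => // u mu nu uQ; rewrite expr1 (eigen_trace2 dQ tQ nu uQ).
exists k => // u mu nu /(eigen_exp k); rewrite Qk mulmx1 => /eqP.
by rewrite -subr_eq0 -{1}[u]scale1r -scalerBl scaler_eq0 (negPf nu) orbF subr_eq0 eq_sym => /eqP.
Qed.

(* A matrix of which some odd power is 1 has finite odd order: its order
   divides that power. *)
Lemma finite_odd_order_of_pow (Q : 'M[F]_2) e : odd e -> Q ^+ e = 1 -> finite_odd_order Q.
Proof.
move=> odde Qe; have exP : exists k, (0 < k)%N && (Q ^+ k == 1).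
  by exists e; rewrite odd_gt0 // Qe eqxx.
case: (ex_minnP exP) => k /andP [k0 /eqP Qk] mink.
have dvd_ke : (k %| e)%N.
  have Qr : Q ^+ (e %% k) = 1.
    by rewrite -[RHS]Qe {2}(divn_eq e k) exprD mulnC exprM Qk expr1n mul1r.
  rewrite /dvdn; apply: contraT; rewrite -lt0n => r0.
  by have := mink (e %% k)%N; rewrite r0 Qr eqxx leqNgt ltn_pmod // => /(_ isT).
exists k; split => //; first by move: odde; case/dvdnP: dvd_ke => c ->; rewrite oddM => /andP [].
move=> j /andP [j0 jk]; apply/eqP => Qj.
by have := mink j; rewrite j0 Qj eqxx leqNgt jk => /(_ isT).
Qed.

Lemma odd_exponent_of_weight (a b : F) m k : a * b = 1 -> odd m -> (k <= m)%N ->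
  a ^+ (m - k) * b ^+ k = 1 -> exists2 e, odd e & a ^+ e = 1 /\ b ^+ e = 1.
Proof.
move=> ab oddm km wt1.
have a0 : a != 0 by apply: contra_eq_neq ab => ->; rewrite mul0r eq_sym oner_eq0.
have ak : a ^+ (m - k) = a ^+ k.
  by rewrite -[LHS]mulr1 -(expr1n F k) -ab (mulrC a) exprMn mulrA wt1 mul1r.
suff [e odde ae] : exists2 e, odd e & a ^+ e = 1.
  by exists e => //; split => //; rewrite -[LHS]mul1r -{1}ae -exprMn ab expr1n.
case: (leqP k (m - k)) => [le_k_mk | lt_mk_k].
  exists (m - k - k)%N; first by rewrite !oddB // addbK.
  by apply: (mulIf (expf_neq0 k a0)); rewrite mul1r -exprD subnK.
exists (k - (m - k))%N.
  by rewrite oddB ?(ltnW lt_mk_k) // oddB //; move: oddm; case: (odd m); case: (odd k).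
apply: (mulIf (expf_neq0 (m - k) a0)); by rewrite mul1r -exprD subnK ?(ltnW lt_mk_k).
Qed.

(* A lower triangular W whose distinct diagonal entries are e-th roots of
   unity satisfies W^e = 1: its characteristic polynomial divides X^e - 1. *)
Lemma pow_eq1_of_lower (W : 'M[F]_2) e : W i0 i1 = 0 ->
  W i0 i0 != W i1 i1 -> W i0 i0 ^+ e = 1 -> W i1 i1 ^+ e = 1 -> W ^+ e = 1.
Proof.
move=> W01 neq ae be.
have trigW : is_trig_mx W.
  by apply/is_trig_mxP => i j; case: (ord2P i) => ->; case: (ord2P j) => ->.
have dvd_char : char_poly W %| 'X^e - 1.
  rewrite char_poly_trig // big_ord2.
  have := @uniq_roots_dvdp _ ('X^e - 1) [:: W i0 i0; W i1 i1].
  rewrite big_cons big_seq1 uniq_rootsE /= inE neq !rootE !hornerE ae be subrr eqxx.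
  by apply.
have [q charq] := dvdpP _ _ dvd_char.
have := congr1 (horner_mx W) charq.
rewrite rmorphM /= Cayley_Hamilton mulr0 rmorphB rmorphXn rmorph1 /= horner_mx_X.
by move/eqP; rewrite subr_eq0 => /eqP.
Qed.

End Eigenvalues.

Section ClosedField.
Context {C : numClosedFieldType}.

Lemma lower_triangular_conj (Q : 'M[C]_2) :
  exists P W : 'M[C]_2, [/\ P \in unitmx, W i0 i1 = 0 & Q = invmx P *m W *m P].
Proof.
have [P unitaryP trigW] := Schur Q (isT : (0 < 2)%N).
have uP := unitarymx_unit unitaryP.
exists P, (conjmx P Q); split => //; first by move/is_trig_mxP: trigW; apply.
by rewrite conjumx // !mulmxA mulVmx // mul1mx -mulmxA mulVmx // mulmx1.
Qed.

(* A matrix of determinant 1 and trace 2 other than the identity is parabolic: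
   a diagonal conjugate would have both entries equal to 1. *)
Lemma parabolic_of_tr2 (Q : 'M[C]_2) : \det Q = 1 -> \tr Q = 2 -> Q != 1%:M ->
  parabolic_tr2 Q.
Proof.
move=> dQ tQ nQ1; split => // -[R [uR /is_diag_mxP diagD]].
set D := invmx R *m Q *m R in diagD.
have [dD tD] := conj_det_tr Q uR; rewrite -/D dQ tQ det2 tr2 in dD tD.
rewrite (diagD i1 i0) // mulr0 subr0 in dD.
have D00 : D i0 i0 = 1 := eq1_of_mul1_add2 dD tD.
have D11 : D i1 i1 = 1 by rewrite D00 mul1r in dD.
have D1 : D = 1%:M.
  apply/matrixP => i j; rewrite [RHS]mxE; case: (eqVneq i j) => [<-|nij].
    by case: (ord2P i) => ->.
  by rewrite diagD.
case/eqP: nQ1; move: D1; rewrite /D => /(congr1 (fun M => R *m M *m invmx R)).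
by rewrite mulmx1 mulmxV // !mulmxA mulmxV // mul1mx -mulmxA mulmxV // mulmx1.
Qed.

Lemma odd_order_or_parabolic (Q P W : 'M[C]_2) e : \det Q = 1 -> P \in unitmx ->
  W i0 i1 = 0 -> Q = invmx P *m W *m P -> odd e ->
  W i0 i0 ^+ e = 1 -> W i1 i1 ^+ e = 1 -> finite_odd_order Q \/ parabolic_tr2 Q.
Proof.
move=> dQ uP W01 QE odde ae be.
have [dW tW] := conj_det_tr W uP; rewrite -QE in dW tW.
case: (eqVneq (W i0 i0) (W i1 i1)) => [eqd | neqd]; last first.
  left; apply: (finite_odd_order_of_pow odde).
  have := horner_mx_uconjC ('X^e) W uP; rewrite !rmorphXn /= !horner_mx_X -QE => ->.
  by rewrite (pow_eq1_of_lower W01 neqd ae be) mulmx1 mulVmx.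
have a1 : W i0 i0 = 1.
  have sq : W i0 i0 ^+ 2 = 1 by rewrite expr2 {2}eqd -dQ dW det2 W01 mul0r subr0.
  by rewrite -ae -[e]odd_double_half odde -mul2n exprD exprM sq expr1n mulr1 expr1.
have tQ : \tr Q = 2 by rewrite tW tr2 -eqd a1.
case: (eqVneq Q 1%:M) => [Q1 | nQ1]; last by right; apply: parabolic_of_tr2.
by left; apply: (finite_odd_order_of_pow (isT : odd 1)); rewrite expr1 Q1.
Qed.

Lemma sympow_sub1_unit (Q : 'M[C]_2) m : \det Q = 1 -> odd m ->
  ~ finite_odd_order Q -> ~ parabolic_tr2 Q -> sympow m.+1 Q - 1%:M \in unitmx.
Proof.
move=> dQ oddm nfo npar.
have [P [W [uP W01 QE]]] := lower_triangular_conj Q.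
have dW : W i0 i0 * W i1 i1 = 1.
  by rewrite -dQ QE (proj1 (conj_det_tr W uP)) det2 W01 mul0r subr0.
rewrite unitmxE unitfE QE det_sympow_conj_sub1 // det_sympow_lower_sub1 //.
apply/prodf_neq0 => k _; rewrite subr_eq0; apply/negP => /eqP wt1.
have [e odde [ae be]] := odd_exponent_of_weight dW oddm (ltnSE (ltn_ord k)) wt1.
by case: (odd_order_or_parabolic dQ uP W01 QE odde ae be).
Qed.

(* If all eigenvalues of Q and H are m-th roots of unity, the Veronese vector
   of a common eigenvector is fixed by ract Q and ract H, hence a nonzero
   2-cycle of C_*(T^2; V_{m+1}). *)
Lemma not_torus_acyclic (Q H : 'M[C]_2) m : \det Q = 1 -> \det H = 1 -> comm_mx Q H ->
  (forall (u : 'rV_2) mu, u != 0 -> u *m Q = mu *: u -> mu ^+ m = 1) ->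
  (forall (u : 'rV_2) mu, u != 0 -> u *m H = mu *: u -> mu ^+ m = 1) ->
  ~ torus_acyclic m.+1 Q H.
Proof.
move=> dQ dH cQH rootQ rootH [inj_bd2 _ _].
have [u nu /andP [/sub_rVP [a uQ] /sub_rVP [b uH]]] := common_eigenvector2 (isT : (0 < 2)%N) cQH.
set v := veronese m.+1 u.
have fixed (A : 'M[C]_2) c : \det A = 1 -> u *m A = c *: u -> c ^+ m = 1 ->
    v *m ract m.+1 A = v.
  move=> dA uA c1.
  by rewrite ract_sympow ?unitmxE ?dA ?unitr1 // veronese_sympow uA veroneseZ c1 scale1r.
have v0 : v = 0.
  apply: inj_bd2; rewrite /bd2 mul_mx_row !mulmxBr !mulmx1.
  rewrite (fixed Q a dQ uQ (rootQ u a nu uQ)) (fixed H b dH uH (rootH u b nu uH)).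
  by rewrite !subrr row_mx0.
by have := veronese_neq0 m nu; rewrite -/v v0 eqxx.
Qed.

End ClosedField.

Lemma double_half_succ m : odd m -> (2 * m./2.+1)%N = m.+1.
Proof. by move=> oddm; rewrite -[in RHS](odd_double_half m) oddm mul2n doubleS add1n. Qed.

Theorem mainTheorem2 (C : numClosedFieldType) (Q H : 'M[C]_2) :
  \det Q = 1 -> \det H = 1 -> Q *m H = H *m Q ->
  ((forall N : nat, (0 < N)%N -> torus_acyclic (2 * N) Q H) <->
   ((~ finite_odd_order Q /\ ~ parabolic_tr2 Q) \/
    (~ finite_odd_order H /\ ~ parabolic_tr2 H))).
Proof.
move=> dQ dH cQH; have unitA (A : 'M[C]_2) : \det A = 1 -> A \in unitmx.
  by rewrite unitmxE => ->; exact: unitr1.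
split=> [acyclic | good N N0]; last first.
  have [m oddm ->] : exists2 m, odd m & (2 * N = m.+1)%N.
    by exists (2 * N).-1; rewrite ?prednK ?muln_gt0 // -subn1 oddB ?muln_gt0 // oddM.
  apply: torus_acyclic_of_unit.
    by rewrite /comm_mx !ract_sympow ?unitA // -!sympowM cQH.
  by case: good => -[nfo npar]; [left|right]; rewrite ract_sympow ?unitA //;
    apply: sympow_sub1_unit.
apply: NNPP => bad.
have classical_or (A B : Prop) : ~ (~ A /\ ~ B) -> A \/ B.
  by move=> nAB; apply: NNPP => nAorB; apply: nAB; split => ?; apply: nAorB; [left|right].
have [kQ oddQ rootQ] := odd_root_eigenvalues dQ (classical_or _ _ (fun h => bad (or_introl h))).
have [kH oddH rootH] := odd_root_eigenvalues dH (classical_or _ _ (fun h => bad (or_intror h))).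
have oddm : odd (kQ * kH) by rewrite oddM oddQ oddH.
have := acyclic _ (ltn0Sn (kQ * kH)./2); rewrite double_half_succ //.
apply: not_torus_acyclic dQ dH cQH _ _ => u mu nu uA.
  by rewrite exprM (rootQ u mu) // expr1n.
by rewrite mulnC exprM (rootH u mu) // expr1n.
Qed.
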